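(* Let $m,n,T$ be positive integers with $T\ge 2$, let $\mathbf{G}\in\mathbb{F}_2^{n\times m}$ have $n$ distinct nonzero rows $\mathbf{g}_1,\dots,\mathbf{g}_n$ spanning a subspace of dimension $T$, and let $\mathbf{A}\in\mathbb{F}_2^{T\times m}$ be a matrix whose rows form a basis of the row space of $\mathbf{G}$. Let $1\le k<\lceil T/2\rceil$, put $T_c=\lceil T/(2k-1)\rceil$ and $T_{\text{last}}=T-(2k-1)(T_c-1)$, and define $$T_{\text{ub}}=\begin{cases}2^T & \text{if } k=1,\\ 2(2k+1)^{T_c-1} & \text{if } k\neq 1 \text{ and } T_{\text{last}}=1,\\ (2k+1)^{T_c-1}(T_{\text{last}}+2) & \text{otherwise.}\end{cases}$$ Then there exists a matrix $\mathbf{P}\in\mathbb{F}_2^{T_k\times T}$ with $T_k\le\min\{n,T_{\text{ub}}\}$ such that every $\mathbf{g}_i$ is the sum over $\mathbb{F}_2$ of at most $k$ rows of $\mathbf{P}\mathbf{A}$. Moreover, for $k\neq 1$, $T_{\text{ub}}=2^{O\left(\frac{T}{k}\log k\right)}$.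
   Context: Such a $\mathbf{P}$ is called a $k$-limited-access scheme with $T_k$ transmissions for the coding matrix $\mathbf{A}$. Logarithms are base 2. *)

From HB Require Import structures.
From mathcomp Require Import all_boot all_order all_algebra.
Set Implicit Arguments. Unset Strict Implicit. Unset Printing Implicit Defensive.

Definition ceil_div (a b : nat) : nat := (a + b.-1) %/ b.

Definition T_c (T k : nat) : nat := ceil_div T (2 * k - 1).

Definition T_last (T k : nat) : nat := T - (2 * k - 1) * (T_c T k - 1).

Definition T_ub (T k : nat) : nat :=
  if k == 1 then 2 ^ T
  else if T_last T k == 1 then 2 * (2 * k + 1) ^ (T_c T k - 1)
  else (2 * k + 1) ^ (T_c T k - 1) * (T_last T k + 2).

From HB Require Import structures.
From mathcomp Require Import all_boot all_order all_algebra.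
From mathcomp Require Import zify.
Set Implicit Arguments. Unset Strict Implicit. Unset Printing Implicit Defensive.
Import GRing.Theory.
Local Open Scope ring_scope.

(* Cut the T coordinates into T_c - 1 blocks of length 2k - 1 followed by a
   last block of length T_last.  On a block of length s <= 2k - 1 every vector
   is a sum of at most k vectors among 0, the unit vectors and the all-ones
   vector: a vector of weight > k is the all-ones vector plus the unit vectors
   of its complement, of which there are fewer than k.  Choosing one such
   vector per block gives T_ub vectors of F_2^T whose k-fold sums cover F_2^T;
   P lists them in the basis A (or, if n <= T_ub, lists the coordinates of the
   g_i themselves).  For the bound, k T_c <= 2T and 2k + 1 <= k^3 give
   T_ub^k <= (2k + 1)^(k T_c) <= k^(6T). *)

(* Sums of exactly k entries, repetitions allowed: this makes covers of
   concatenated blocks the componentwise pairing of covers of the blocks. *)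
Definition ksum_cover (V : zmodType) (I : Type) (k : nat) (D : I -> V) :=
  forall x : V, exists h : 'I_k -> I, x = \sum_(j < k) D (h j).

Lemma sum_nth_pad (V : zmodType) (I : Type) (D : I -> V) (i0 : I) (s : seq I) k :
  D i0 = 0 -> (size s <= k)%N -> \sum_(j < k) D (nth i0 s j) = \sum_(i <- s) D i.
Proof.
move=> D0; elim: s k => [|i s IHs] k le_s_k.
  by rewrite big_nil big1 // => j _; rewrite nth_nil.
by case: k le_s_k => // k le_s_k; rewrite big_ord_recl big_cons IHs.
Qed.

Lemma ksum_cover_seq (V : zmodType) (I : Type) k (D : I -> V) (i0 : I) :
  D i0 = 0 -> (forall x, exists2 s : seq I, (size s <= k)%N & x = \sum_(i <- s) D i) ->
  ksum_cover k D.
Proof.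
move=> D0 cover x; have [s le_s_k ->] := cover x.
by exists (fun j => nth i0 s j); rewrite sum_nth_pad.
Qed.

Lemma ksum_cover_comp (V : zmodType) (I J : Type) k (D : I -> V) (f : J -> I) (g : I -> J) :
  cancel g f -> ksum_cover k D -> ksum_cover k (D \o f).
Proof.
move=> gK cover x; have [h ->] := cover x.
by exists (g \o h); apply: eq_bigr => j _ /=; rewrite gK.
Qed.

Lemma ksum_cover_castmx (V : zmodType) (I : Type) k m n n' (e : n = n')
    (D : I -> 'M[V]_(m, n)) :
  ksum_cover k D -> ksum_cover k (fun i => castmx (erefl, e) (D i)).
Proof.
case: n' / e => cover x; have [h ->] := cover x.
by exists h; apply: eq_bigr => j _; rewrite castmx_id.
Qed.

Lemma sum_row_mx (V : nmodType) (I : Type) (r : seq I) (P : pred I) m n1 n2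
    (A : I -> 'M[V]_(m, n1)) (B : I -> 'M[V]_(m, n2)) :
  \sum_(i <- r | P i) row_mx (A i) (B i) =
  row_mx (\sum_(i <- r | P i) A i) (\sum_(i <- r | P i) B i).
Proof. by elim/big_rec3: _ => [|i ? ? ? _ ->]; rewrite ?row_mx0 ?add_row_mx. Qed.

Lemma ksum_cover_row_mx (V : zmodType) (I1 I2 : Type) k m n1 n2
    (D1 : I1 -> 'M[V]_(m, n1)) (D2 : I2 -> 'M[V]_(m, n2)) :
  ksum_cover k D1 -> ksum_cover k D2 ->
  ksum_cover k (fun i : I1 * I2 => row_mx (D1 i.1) (D2 i.2)).
Proof.
move=> cover1 cover2 x; rewrite -[x]hsubmxK.
have [h1 ->] := cover1 (lsubmx x); have [h2 ->] := cover2 (rsubmx x).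
by exists (fun j => (h1 j, h2 j)); rewrite sum_row_mx.
Qed.

Lemma ksum_cover_mxvec (V : zmodType) (I : Type) k c n (D : I -> 'rV[V]_n) :
  ksum_cover k D ->
  ksum_cover k (fun p : {ffun 'I_c -> I} => mxvec (\matrix_(i < c) D (p i))).
Proof.
move=> cover x; rewrite -[x]vec_mxK.
have [h eh] := fin_all_exists (fun i => cover (row i (vec_mx x))).
exists (fun j => [ffun i => h i j]); rewrite -raddf_sum; congr mxvec.
apply/row_matrixP => i; rewrite eh; apply/rowP => t; rewrite !mxE !summxE.
by apply: eq_bigr => j _; rewrite !mxE ffunE.
Qed.

Lemma F2_pchar2 : 2%N \in [pchar 'F_2].
Proof. exact: pchar_Fp. Qed.

Lemma F2_addxx (V : lmodType 'F_2) (v : V) : v + v = 0.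
Proof. by rewrite -[v]scale1r -scalerDl (addrr_pchar2 F2_pchar2) scale0r. Qed.

Lemma F2_nat_neq0 (a : 'F_2) : a = (a != 0)%:R.
Proof. by case: a => -[|[|//]] ? ; apply: val_inj. Qed.

Lemma sum_delta_row (R : pzSemiRingType) n (U : {set 'I_n}) :
  \sum_(j in U) delta_mx 0 j = \row_(t < n) ((t \in U)%:R : R).
Proof.
apply/rowP => t; rewrite summxE !mxE.
under eq_bigr do rewrite mxE eqxx /=.
have [tU|tNU] := boolP (t \in U).
  rewrite (bigD1 t) //= eqxx big1 ?addr0 // => i /andP[_ /negPf].
  by rewrite eq_sym => ->.
by rewrite big1 // => i iU; case: eqP iU => // <-; rewrite (negPf tNU).
Qed.
Lemma F2_row_support n (y : 'rV['F_2]_n) :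
  y = \sum_(j in [set j | y 0 j != 0]) delta_mx 0 j.
Proof. by rewrite sum_delta_row; apply/rowP => t; rewrite !mxE inE -F2_nat_neq0. Qed.

Lemma F2_row_cosupport n (y : 'rV['F_2]_n) :
  y = const_mx 1 + \sum_(j in ~: [set j | y 0 j != 0]) delta_mx 0 j.
Proof.
rewrite sum_delta_row; apply/rowP => t; rewrite !mxE !inE [LHS]F2_nat_neq0.
by case: (_ != 0); rewrite /= ?mulr1n ?mulr0n ?addr0 ?(addrr_pchar2 F2_pchar2).
Qed.

Definition block_vec (s i : nat) : 'rV['F_2]_s :=
  if i is j.+1 then oapp (delta_mx 0) (const_mx 1) (insub j) else 0.

Lemma block_vec_unit s (j : 'I_s) : block_vec s j.+1 = delta_mx 0 j.
Proof. by rewrite /= valK. Qed.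

Lemma block_vec_ones s : block_vec s s.+1 = const_mx 1.
Proof. by rewrite /= insubN ?ltnn. Qed.

Lemma block_vec_cover s k N : (s <= 2 * k - 1)%N -> (s + (k < s) <= N)%N ->
  ksum_cover k (fun i : 'I_N.+1 => block_vec s i).
Proof.
move=> le_s_2k le_s_N; apply: (@ksum_cover_seq _ _ _ _ ord0) => // y.
set S := [set j | y 0 j != 0].
pose unit_idx (j : 'I_s) : 'I_N.+1 := inord j.+1.
have sum_units U : \sum_(i <- [seq unit_idx j | j <- enum U]) block_vec s i =
                   \sum_(j in U) delta_mx 0 j.
  rewrite big_map big_enum; apply: eq_bigr => j _.
  by rewrite inordK ?block_vec_unit //; have := ltn_ord j; lia.
have [small|large] := leqP #|S| k.
  exists [seq unit_idx j | j <- enum S]; first by rewrite size_map -cardE.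
  by rewrite sum_units -F2_row_support.
have card_S := cardsC S; rewrite card_ord in card_S.
have le_S_s : (#|S| <= s)%N by lia.
exists (inord s.+1 :: [seq unit_idx j | j <- enum (~: S)]).
  by rewrite /= size_map -cardE; lia.
rewrite big_cons sum_units inordK ?block_vec_ones -?F2_row_cosupport //.
have k_lt_s : (k < s)%N by lia.
by move: le_s_N; rewrite k_lt_s addn1.
Qed.

Lemma F2_sum_as_set (V : lmodType 'F_2) (I : finType) (F : I -> V) k (h : 'I_k -> I) :
  exists2 S : {set I}, (#|S| <= k)%N & \sum_(j < k) F (h j) = \sum_(i in S) F i.
Proof.
elim: k h => [|k IHk] h; first by exists set0; rewrite ?cards0 ?big_ord0 ?big_set0.
rewrite big_ord_recl; have [S le_S_k ->] := IHk (fun j => h (lift ord0 j)).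
have [h0S|h0NS] := boolP (h ord0 \in S).
  exists (S :\ h ord0); first by rewrite (cardsD1 (h ord0)) h0S in le_S_k; lia.
  by rewrite (big_setD1 (h ord0)) //= addrA F2_addxx add0r.
exists (h ord0 |: S); first by rewrite cardsU1 h0NS; lia.
by rewrite big_setU1.
Qed.

Lemma ksum_cover_rows k N n (D : 'I_N -> 'rV['F_2]_n) : ksum_cover k D ->
  forall x, exists2 S : {set 'I_N}, (#|S| <= k)%N &
    x = \sum_(r in S) row r (\matrix_(r < N) D r).
Proof.
move=> cover x; have [h ->] := cover x; have [S le_S_k ->] := F2_sum_as_set D h.
by exists S => //; apply: eq_bigr => r _; rewrite rowK.
Qed.

Lemma ceil_div_bounds a b : (0 < a)%N -> (0 < b)%N ->
  (b * (ceil_div a b - 1) < a <= b * ceil_div a b)%N.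
Proof.
move=> a_gt0 b_gt0; rewrite /ceil_div.
have := divn_eq (a + b.-1) b; have := ltn_pmod (a + b.-1) b_gt0.
set q := ((a + b.-1) %/ b)%N; set r := ((a + b.-1) %% b)%N; nia.
Qed.

Lemma T_split T k : (0 < k)%N -> (0 < T)%N ->
  [/\ ((T_c T k - 1) * (2 * k - 1) + T_last T k = T)%N,
      (0 < T_last T k <= 2 * k - 1)%N & (0 < T_c T k)%N].
Proof.
move=> k_gt0 T_gt0; have b_gt0 : (0 < 2 * k - 1)%N by lia.
have /andP[] := ceil_div_bounds T_gt0 b_gt0.
rewrite /T_last -/(T_c T k) [((_ - 1) * _)%N]mulnC; set q := T_c T k.
set b := (2 * k - 1)%N; move=> lt_T le_T.
have q_gt0 : (0 < q)%N by case: (posnP q) le_T => [->|//]; rewrite muln0; lia.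
have bq : (b * q = b * (q - 1) + b)%N by rewrite -mulnSr subn1 prednK.
split; lia.
Qed.

(* A block of length 1 needs no all-ones vector, which is e_0: hence the
   dictionaries of size 2 for k = 1 and for a last block of length 1. *)
Definition block_dict_size k := (if k == 1%N then 1 else 2 * k)%N.+1.
Definition last_dict_size T k := (if T_last T k == 1%N then 1 else (T_last T k).+1).+1.

Definition dict_index T k :=
  ({ffun 'I_(T_c T k - 1) -> 'I_(block_dict_size k)} * 'I_(last_dict_size T k))%type.

Lemma card_dict_index T k : (0 < k)%N -> (0 < T)%N -> #|{: dict_index T k}| = T_ub T k.
Proof.
move=> k_gt0 T_gt0; rewrite card_prod card_ffun !card_ord /block_dict_size /last_dict_size /T_ub.
case: eqP => [->|_]; last by case: ifP => _; rewrite addn1 ?addn2 // mulnC.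
have [eT /andP[L_gt0 L_le1] _] := T_split (ltn0Sn 0) T_gt0.
have L1 : T_last T 1 = 1%N by lia.
by rewrite L1 -expnSr; congr (_ ^ _)%N; lia.
Qed.

Lemma T_ub_cover T k : (0 < k)%N -> (0 < T)%N ->
  exists D : 'I_(T_ub T k) -> 'rV['F_2]_T, ksum_cover k D.
Proof.
move=> k_gt0 T_gt0; have [eT /andP[_ L_le] _] := T_split k_gt0 T_gt0.
have cover_block : ksum_cover k (fun i : 'I_(block_dict_size k) => block_vec (2 * k - 1) i).
  apply: block_vec_cover => //; rewrite /block_dict_size; case: eqP => [->|k_neq1] //.
  have k_lt : (k < 2 * k - 1)%N by lia.
  by rewrite k_lt addn1; lia.
have cover_last : ksum_cover k (fun i : 'I_(last_dict_size T k) => block_vec (T_last T k) i).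
  apply: block_vec_cover => //; rewrite /last_dict_size.
  case: eqP => [->|_]; first by rewrite ltnNge k_gt0.
  by case: (k < _)%N => /=; lia.
pose D (p : dict_index T k) := castmx (erefl, eT)
  (row_mx (mxvec (\matrix_(i < T_c T k - 1) block_vec (2 * k - 1) (p.1 i)))
          (block_vec (T_last T k) p.2)).
have coverD : ksum_cover k D.
  exact/ksum_cover_castmx/(ksum_cover_row_mx (ksum_cover_mxvec cover_block) cover_last).
have card_I := card_dict_index k_gt0 T_gt0.
exists (D \o enum_val \o cast_ord (esym card_I)).
apply: (ksum_cover_comp (g := cast_ord card_I \o enum_rank)) coverD => i /=.
by rewrite cast_ordK enum_rankK.
Qed.

Lemma T_ub_le_pow_T_c T k : k != 1%N -> (0 < k)%N -> (0 < T)%N ->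
  (T_ub T k <= (2 * k + 1) ^ T_c T k)%N.
Proof.
move=> k_neq1 k_gt0 T_gt0; have [_ /andP[_ L_le] c_gt0] := T_split k_gt0 T_gt0.
rewrite /T_ub (negPf k_neq1) [in X in (_ <= X)%N](_ : T_c T k = (T_c T k - 1).+1); last lia.
rewrite expnSr; case: ifP => _; [rewrite mulnC|]; apply: leq_mul => //; lia.
Qed.

Lemma k_T_c_le T k : (0 < k <= T)%N -> (k * T_c T k <= 2 * T)%N.
Proof.
case/andP=> k_gt0 k_le_T; have T_gt0 : (0 < T)%N by lia.
have [eT /andP[L_gt0 _] c_gt0] := T_split k_gt0 T_gt0.
have le_k_c : (k * (T_c T k - 1) <= (T_c T k - 1) * (2 * k - 1))%N.
  by rewrite mulnC leq_mul2l; apply/orP; right; lia.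
have -> : (k * T_c T k = k * (T_c T k - 1) + k)%N by rewrite -mulnSr subn1 prednK.
lia.
Qed.

Lemma T_ub_asymptotic T k : (2 <= k <= T)%N -> (T_ub T k ^ k <= k ^ (6 * T))%N.
Proof.
case/andP=> k_ge2 k_le_T; have k_gt0 : (0 < k)%N by lia.
have T_gt0 : (0 < T)%N by lia.
have k_neq1 : k != 1%N by case: eqP k_ge2 => // ->.
apply: (@leq_trans (((2 * k + 1) ^ T_c T k) ^ k)).
  by rewrite leq_exp2r // T_ub_le_pow_T_c.
rewrite -expnM (mulnC (T_c T k)); apply: (@leq_trans ((2 * k + 1) ^ (2 * T))).
  by apply: leq_pexp2l; rewrite ?addn1 // k_T_c_le ?k_gt0.
have -> : (6 * T = 3 * (2 * T))%N by lia.
by rewrite (expnM k) leq_exp2r ?muln_gt0 //; nia.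
Qed.

Lemma limited_access_scheme m n T k (G : 'M['F_2]_(n, m)) (A : 'M['F_2]_(T, m)) :
  (0 < T)%N -> (0 < k)%N -> (G <= A)%MS ->
  exists (Tk : nat) (P : 'M['F_2]_(Tk, T)),
    (Tk <= minn n (T_ub T k))%N /\
    forall i : 'I_n, exists S : {set 'I_Tk},
      (#|S| <= k)%N /\ row i G = \sum_(j in S) row j (P *m A).
Proof.
move=> T_gt0 k_gt0 le_G_A; pose X := G *m pinvmx A.
have XA : X *m A = G := mulmxKpV le_G_A.
have [le_n_ub|lt_ub_n] := leqP n (T_ub T k).
  exists n, X; split; first lia.
  by move=> i; exists [set i]; rewrite cards1 k_gt0 big_set1 XA.
have [D coverD] := T_ub_cover k_gt0 T_gt0.
exists (T_ub T k), (\matrix_r D r); split; first lia.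
move=> i; have [S le_S_k eS] := ksum_cover_rows coverD (row i X).
exists S; split => //; rewrite -XA row_mul eS mulmx_suml.
by apply: eq_bigr => r _; rewrite row_mul.
Qed.

Theorem theorem1 :
  (forall (m n T k : nat) (G : 'M['F_2]_(n, m)) (A : 'M['F_2]_(T, m)),
      (0 < m)%N -> (0 < n)%N -> (2 <= T)%N ->
      injective (fun i : 'I_n => row i G) ->
      (forall i : 'I_n, row i G != 0) ->
      \rank G = T ->
      (A == G)%MS -> row_free A ->
      (1 <= k)%N -> (k < ceil_div T 2)%N ->
      exists (Tk : nat) (P : 'M['F_2]_(Tk, T)),
        (Tk <= minn n (T_ub T k))%N /\
        forall i : 'I_n, exists S : {set 'I_Tk},
          (#|S| <= k)%N /\ row i G = \sum_(j in S) row j (P *m A))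
  /\
  (exists C : nat, forall T k : nat,
      (2 <= T)%N -> (1 <= k)%N -> (k < ceil_div T 2)%N -> k != 1%N ->
      (T_ub T k ^ k <= k ^ (C * T))%N).
Proof.
split.
  move=> m n T k G A _ _ T_ge2 _ _ _ /andP[_ le_G_A] _ k_gt0 _.
  exact: limited_access_scheme (ltnW T_ge2) k_gt0 le_G_A.
exists 6%N => T k _ k_gt0 k_lt k_neq1; apply: T_ub_asymptotic.
by move: k_lt; rewrite /ceil_div; lia.
Qed.
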